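(* Fix $a>0$. Let $\mu$ be a probability measure on $\mathbb{R}_+^\infty$ and $(\mathbf{U},\mathbf{V}_a)$ a coupling of $\mu$ and $\pi_a$ such that almost surely $\limsup_{d\to\infty}\frac{\log\log d}{\log d}\sum_{i=1}^d|V_{a,i}-U_i|=0$ and $\limsup_{d\to\infty}\frac{U_d}{dV_{a,d}}<\infty$. Then, almost surely, there exists $i_0\ge2$ such that $s(\mathbf{U})_i\ge(4a)^{-1}\log i$ for all $i\ge i_0$. Moreover $s(\mathbf{U})$, $s(\mathbf{U}\wedge\mathbf{V}_a)$ and $s(\mathbf{V}_a)$ all satisfy the summability condition $\sum_i e^{-\alpha s(\cdot)_i^2}<\infty$ for all $\alpha>0$ almost surely; in particular $\mu\in\mathcal{S}$.
   Context: $\pi_a=\bigotimes_{i\ge1}\operatorname{Exp}(2+ia)$ with $\operatorname{Exp}(\lambda)$ the exponential law of rate $\lambda$. For $\mathbf{v}=(v_1,v_2,\dots)\in\mathbb{R}_+^\infty$, $s(\mathbf{v})$ is the vector with $i$-th coordinate $v_1+\cdots+v_i$; $\wedge$ is the coordinatewise minimum. $\mathcal{S}$ is the set of laws of gap vectors $(y_i-y_{i-1})_{i\ge1}$ of random sequences $0=y_0\le y_1\le\cdots$ with $\sum_ie^{-\alpha y_i^2}<\infty$ for all $\alpha>0$ a.s. (equivalently, laws of $\mathbf{v}$ with $s(\mathbf{v})$ satisfying this summability). *)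

From HB Require Import structures.
From mathcomp Require Import all_boot all_order all_algebra.
From mathcomp Require Import all_classical all_reals all_analysis.
Set Implicit Arguments. Unset Strict Implicit. Unset Printing Implicit Defensive.
Import Order.TTheory GRing.Theory Num.Theory.
Import numFieldNormedType.Exports.
Local Open Scope classical_set_scope.
Local Open Scope ring_scope.

(* Sequences in R^infty are indexed from 0 : the paper's coordinate v_i
   (i >= 1) is [v (i-1)]. *)

(* s(v)_i = v_1 + ... + v_i, i.e. with our 0-based indexing
   [partial_sum v i = \sum_(j < i) v j]; [partial_sum v 0 = 0 = y_0]. *)
Definition partial_sum {R : realType} (v : nat -> R) (i : nat) : R :=
  \sum_(j < i) v j.

Definition seq_min {R : realType} (u v : nat -> R) : nat -> R :=
  fun i => Num.min (u i) (v i).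

Definition gauss_summable {R : realType} (y : nat -> R) : Prop :=
  forall alpha : R, 0 < alpha ->
    cvgn (series (fun i => expR (- alpha * (y i) ^+ 2))).

(* The random sequence V (on the probability space (T,P)) has law
   pi_a = (x)_{i>=1} Exp(2 + i a): each coordinate is a random variable and,
   for every n and Borel sets B_1..B_n, P(V_1 in B_1, ..., V_n in B_n) =
   prod_i Exp(2 + i a)(B_i)  (independence + exponential marginals). *)
Definition has_law_pi {R : realType} (d : measure_display)
  (T : measurableType d) (P : probability T R) (a : R) (V : T -> nat -> R)
  : Prop :=
  (forall i, measurable_fun setT (fun w => V w i)) /\
  (forall (n : nat) (B : nat -> set R), (forall i, measurable (B i)) ->
     P (\bigcap_(i in `I_n) [set w | B i (V w i)]) =
     (\prod_(i < n) exponential_prob (2 + (i.+1)%:R * a) (B i))%E).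

(* A probability measure mu on R_+^infty belongs to S iff a random vector
   v with law mu satisfies: s(v) fulfills [gauss_summable] almost surely. *)
Definition law_in_S {R : realType} (d : measure_display)
  (T : measurableType d) (P : probability T R) (U : T -> nat -> R) : Prop :=
  (forall w i, 0 <= U w i) /\
  {ae P, forall w, gauss_summable (partial_sum (U w))}.

From HB Require Import structures.
From mathcomp Require Import all_boot all_order all_algebra.
From mathcomp Require Import all_classical all_reals all_analysis.
From mathcomp Require Import ring lra.
Set Implicit Arguments. Unset Strict Implicit. Unset Printing Implicit Defensive.
Import Order.TTheory GRing.Theory Num.Theory.
Import numFieldNormedType.Exports.
Local Open Scope classical_set_scope.
Local Open Scope ring_scope.

(* Write lambda_i = 2 + (i+1) a for the rate of V_i (coordinates are indexed
   from 0) and p = e^{-1} = P(V_i > 1/lambda_i).  Since V >= 0, s(V)_n is at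
   least the sum of the weights 1/lambda_i over the i < n with
   V_i > 1/lambda_i, so the event {s(V)_n < c ln n} is covered by the
   "rectangles" fixing which V_i exceed their threshold, over the patterns
   whose selected weights sum to less than c ln n.  By independence such a
   pattern is a Bernoulli(p) pattern; a Chernoff bound, combined with
   sum_{i<n} 1/lambda_i >= (ln n)/a + O(1) and sum_i 1/lambda_i^2 < oo, makes
   the probability O(n^-2) for some c > 1/(4a) (here p > 1/4 is used).
   Borel-Cantelli then gives s(V)_n >= c ln n eventually, almost surely.  The
   hypothesis on sum_{i<n} |V_i - U_i| transfers this bound, with c lowered
   to 1/(4a), to s(U) and s(U /\ V); finally an eventual logarithmic lower
   bound on a sequence y yields sum_n exp(-alpha y_n^2) < oo. *)

Section bernoulli_chernoff.
Context {R : realType}.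

Lemma bernoulli_expN_moment_le (p x : R) : 0 <= p <= 1 -> 0 <= x ->
  p * expR (- x) + (1 - p) <= expR (- (p * x) + p * x ^+ 2).
Proof.
move=> /andP[p0 p1] x0.
have x1 : 0 < 1 + x by rewrite ltr_pwDl.
have ex : expR (- x) <= (1 + x)^-1.
  by rewrite expRN lef_pV2 ?posrE ?expR_gt0 //; exact: expR_ge1Dx.
have lin : p * expR (- x) + (1 - p) <= 1 - p * x / (1 + x).
  have : p * expR (- x) <= p * (1 + x)^-1 by apply: ler_wpM2l.
  have -> : p * x / (1 + x) = p - p * (1 + x)^-1 by field; rewrite gt_eqF.
  lra.
apply: (le_trans lin); apply: le_trans (expR_ge1Dx _) _; rewrite ler_expR.
have : p * x / (1 + x) * x <= p * x * x.
  apply: ler_wpM2r => //; rewrite ler_pdivrMr // ler_peMr ?mulr_ge0 //.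
  by rewrite lerDl.
have -> : p * x / (1 + x) * x = p * x - p * x / (1 + x) by field; rewrite gt_eqF.
rewrite expr2 mulrA; lra.
Qed.

Lemma patterns_expN_moment (n : nat) (p : R) (z : 'I_n -> R) :
  \sum_(f : {ffun 'I_n -> bool})
     expR (- \sum_(i < n | f i) z i) * \prod_(i < n) (if f i then p else 1 - p)
  = \prod_(i < n) (p * expR (- z i) + (1 - p)).
Proof.
have -> : \prod_(i < n) (p * expR (- z i) + (1 - p)) =
    \prod_(i < n) \sum_(b : bool) (if b then p * expR (- z i) else 1 - p).
  by apply: eq_bigr => i _; rewrite big_bool.
rewrite (bigA_distr_bigA (fun (i : 'I_n) (b : bool) =>
  if b then p * expR (- z i) else 1 - p)) /=.
apply: eq_bigr => f _; rewrite -sumrN expR_sum big_mkcond /= -big_split /=.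
by apply: eq_bigr => i _; case: (f i); rewrite ?mul1r // mulrC.
Qed.

Lemma chernoff_lower_tail (n : nat) (y : nat -> R) (p r s : R) :
  0 <= p <= 1 -> 0 <= s -> (forall i, 0 <= y i) ->
  \sum_(f : {ffun 'I_n -> bool} | \sum_(i < n | f i) y i < r)
     \prod_(i < n) (if f i then p else 1 - p)
  <= expR (s * r - p * s * \sum_(i < n) y i + p * s ^+ 2 * \sum_(i < n) y i ^+ 2).
Proof.
move=> /andP[p0 p1] s0 y0.
pose w (f : {ffun 'I_n -> bool}) := \prod_(i < n) (if f i then p else 1 - p).
have w0 f : 0 <= w f by apply: prodr_ge0 => i _; case: (f i); lra.
have markov : \sum_(f : {ffun 'I_n -> bool} | \sum_(i < n | f i) y i < r) w f <=
    \sum_(f : {ffun 'I_n -> bool}) expR (s * (r - \sum_(i < n | f i) y i)) * w f.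
  rewrite [leRHS](bigID (fun f : {ffun 'I_n -> bool} => \sum_(i < n | f i) y i < r)) /=.
  rewrite -[leLHS]addr0; apply: lerD; last first.
    by apply: sumr_ge0 => f _; rewrite mulr_ge0 ?expR_ge0.
  apply: ler_sum => f fr; rewrite ler_peMl //.
  by apply: le_trans (expR_ge1Dx _); rewrite lerDl mulr_ge0 // subr_ge0 ltW.
have moment : \sum_(f : {ffun 'I_n -> bool}) expR (s * (r - \sum_(i < n | f i) y i)) * w f =
    expR (s * r) * \prod_(i < n) (p * expR (- (s * y i)) + (1 - p)).
  rewrite -patterns_expN_moment mulr_sumr; apply: eq_bigr => f _.
  by rewrite mulrBr expRD -mulrA mulr_sumr.
have exponent : - (p * s * \sum_(i < n) y i) + p * s ^+ 2 * \sum_(i < n) y i ^+ 2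
    = \sum_(i < n) (- (p * (s * y i)) + p * (s * y i) ^+ 2).
  rewrite big_split /= sumrN !mulr_sumr; congr (- _ + _);
    by apply: eq_bigr => i _; ring.
apply: (le_trans markov); rewrite moment -addrA expRD exponent expR_sum.
rewrite ler_wpM2l ?expR_ge0 //; apply: ler_prod => i _; apply/andP; split.
  by rewrite addr_ge0 ?mulr_ge0 ?expR_ge0 //; lra.
by apply: bernoulli_expN_moment_le; rewrite ?p0 ?p1 ?mulr_ge0.
Qed.

End bernoulli_chernoff.

Lemma measure_bigsetU_le {R : realType} (d : measure_display)
    (T : measurableType d) (mu : {measure set T -> \bar R})
    (I : Type) (s : seq I) (Q : pred I) (F : I -> set T) :
  (forall i, measurable (F i)) ->
  (mu (\big[setU/set0]_(i <- s | Q i) F i) <= \sum_(i <- s | Q i) mu (F i))%E.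
Proof.
move=> mF; elim: s => [|x s IH]; first by rewrite !big_nil measure0.
rewrite !big_cons; case: ifPn => // _.
apply: le_trans (measureU2 mu (mF x) (bigsetU_measurable _ _)) _ => //.
by rewrite leeD2l.
Qed.

Section exponential_tails.
Context {R : realType}.

(* [exponential_prob r] is a probability measure as soon as r > 0. *)
Let exponential_probability (r : R) (r0 : 0 < r) :=
  @exponential_distribution_exponential_prob__canonical__probability_measure_Probability R r r0.

Lemma exponential_prob_lt0 (r : R) : exponential_prob r `]-oo, 0[ = 0%E.
Proof.
rewrite /exponential_prob integral0_eq // => x /=; rewrite in_itv /= => x0.
by rewrite lt0_exponential_pdf.
Qed.

Lemma exponential_prob_le (r y : R) : 0 < r -> 0 < y ->
  exponential_prob r `]-oo, y] = (1 - (expR (- r * y))%:E)%E.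
Proof.
move=> r0 y0.
have -> : `]-oo, y]%classic = `]-oo, 0[%classic `|` `[0, y]%classic :> set R.
  apply/seteqP; split => x /=; rewrite !in_itv /=.
    by move=> xy; case: (ltP x 0) => x0; [left|right; rewrite xy].
  by case=> [x0|/andP[_ //]]; rewrite ltW // (lt_trans x0 y0).
rewrite (measureU (exponential_probability r0)) //=.
- by rewrite exponential_prob_lt0 add0e exponential_prob_itv0c.
- apply/seteqP; split => x //=; rewrite !in_itv /= => -[x0 /andP[x0' _]].
  by move: (lt_le_trans x0 x0'); rewrite ltxx.
Qed.

Lemma exponential_prob_gt (r y : R) : 0 < r -> 0 < y ->
  exponential_prob r `]y, +oo[ = (expR (- r * y))%:E.
Proof.
move=> r0 y0; rewrite -setCitvl.
rewrite (probability_setC (exponential_probability r0)) //= exponential_prob_le //.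
by rewrite -EFinB opprB addrC subrK.
Qed.

End exponential_tails.

Definition rate {R : realType} (a : R) (i : nat) : R := 2 + i.+1%:R * a.

Section rate_estimates.
Context {R : realType} (a : R) (a0 : 0 < a).

Lemma rate_gt0 i : 0 < rate a i.
Proof. by rewrite /rate ltr_wpDr // mulr_ge0 // ltW. Qed.

Lemma rate_ge2 i : 2 <= rate a i.
Proof. by rewrite /rate lerDl mulr_ge0 // ltW. Qed.

Lemma rateS i : rate a i.+1 = rate a i + a.
Proof. by rewrite /rate -[i.+2%:R]natr1; ring. Qed.

(* lambda_n >= n a, hence ln lambda_n >= ln n + ln a. *)
Lemma ln_rate_ge n : (1 <= n)%N -> ln n%:R + ln a <= ln (rate a n).
Proof.
move=> n1; have n0 : 0 < n%:R :> R by rewrite ltr0n.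
rewrite -lnM ?posrE // ler_ln ?posrE ?mulr_gt0 ?rate_gt0 //.
rewrite /rate -[n.+1%:R]natr1 mulrDl mul1r addrC -addrA lerDl addr_ge0 // ltW //.
Qed.

(* Comparison of sum_i 1/lambda_i with the integral of 1/x: since the
   lambda_i increase by steps of a, ln lambda_{i+1} - ln lambda_i <= a/lambda_i. *)
Lemma sum_inv_rate_ge n :
  (ln (rate a n) - ln (rate a 0)) / a <= \sum_(i < n) (rate a i)^-1.
Proof.
elim: n => [|n IH]; first by rewrite big_ord0 subrr mul0r.
rewrite big_ord_recr /=.
have step : ln (rate a n.+1) - ln (rate a n) <= a / rate a n.
  have l0 := rate_gt0 n.
  rewrite -ln_div ?posrE ?rate_gt0 // rateS.
  have -> : (rate a n + a) / rate a n = 1 + a / rate a n by field; rewrite gt_eqF.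
  by apply: le_ln1Dx; apply: lt_le_trans (ltrN10 R) _; rewrite divr_ge0 // ltW.
have -> : (ln (rate a n.+1) - ln (rate a 0)) / a =
    (ln (rate a n) - ln (rate a 0)) / a + (ln (rate a n.+1) - ln (rate a n)) / a.
  by field; rewrite gt_eqF.
by apply: lerD => //; rewrite ler_pdivrMr // mulrC.
Qed.

(* sum_i 1/lambda_i^2 is bounded, by comparison with the telescoping sum of
   1/lambda_i - 1/lambda_{i+1} = a/(lambda_i lambda_{i+1}). *)
Lemma sum_inv_rate_sqr_le n : \sum_(i < n) ((rate a i)^-1) ^+ 2 <=
  (2 + a) / (2 * a) * ((rate a 0)^-1 - (rate a n)^-1).
Proof.
elim: n => [|n IH]; first by rewrite big_ord0 subrr mulr0.
rewrite big_ord_recr /=.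
have -> : (2 + a) / (2 * a) * ((rate a 0)^-1 - (rate a n.+1)^-1) =
    (2 + a) / (2 * a) * ((rate a 0)^-1 - (rate a n)^-1) +
    (2 + a) / (2 * a) * ((rate a n)^-1 - (rate a n.+1)^-1) by ring.
apply: lerD => //; rewrite rateS.
have l0 := rate_gt0 n; have l2 := rate_ge2 n.
have l1 : 0 < rate a n + a by rewrite addr_gt0.
have a2 : 0 < 2 + a by rewrite addr_gt0.
have -> : (2 + a) / (2 * a) * ((rate a n)^-1 - (rate a n + a)^-1) =
    (2 + a) / (2 * (rate a n * (rate a n + a))).
  by field; rewrite (gt_eqF l1) (gt_eqF l0) (gt_eqF a0).
have -> : (rate a n)^-1 ^+ 2 = (2 + a) / (2 * (rate a n * (rate a n + a))) *
    ((2 * (rate a n + a)) / ((2 + a) * rate a n)).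
  by field; rewrite ?(gt_eqF l1) ?(gt_eqF l0) ?(gt_eqF a0) ?(gt_eqF a2).
rewrite ger_pMr; last by apply: divr_gt0; [lra | rewrite !mulr_gt0].
rewrite ler_pdivrMr ?mulr_gt0 //.
have := ler_wpM2l (ltW a0) l2; nra.
Qed.

(* The Chernoff exponent of the main argument, with weights 1/lambda_i,
   threshold c ln n and parameters p, s tuned so that s (p/a - c) = 2,
   is at most -2 ln n + K: this is what makes the failure probabilities
   summable. *)
Lemma chernoff_exponent_le (p c s : R) : 0 <= p -> 0 <= s ->
  s * (p / a - c) = 2 ->
  exists K, forall n, (1 <= n)%N ->
   s * (c * ln n%:R) - p * s * \sum_(i < n) (rate a i)^-1
   + p * s ^+ 2 * \sum_(i < n) ((rate a i)^-1) ^+ 2 <= - (2 * ln n%:R) + K.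
Proof.
move=> p0 s0 hs.
pose C := (2 + a) / (2 * a) * (rate a 0)^-1.
exists (p * s / a * (ln (rate a 0) - ln a) + p * s ^+ 2 * C) => n n1.
have hY := sum_inv_rate_ge n; have hQ := sum_inv_rate_sqr_le n.
have hL := ln_rate_ge n1.
set Y := \sum_(i < n) (rate a i)^-1 in hY *.
set Q := \sum_(i < n) ((rate a i)^-1) ^+ 2 in hQ *.
set L := ln n%:R in hL *.
have QC : p * s ^+ 2 * Q <= p * s ^+ 2 * C.
  apply: ler_wpM2l; first by rewrite mulr_ge0 ?exprn_ge0.
  apply: le_trans hQ _; rewrite /C ler_wpM2l //.
    by rewrite divr_ge0 ?mulr_ge0 ?addr_ge0 // ltW.
  by rewrite lerBlDr lerDl invr_ge0 ltW // rate_gt0.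
have YL : p * s * ((L + ln a - ln (rate a 0)) / a) <= p * s * Y.
  apply: ler_wpM2l; first by rewrite mulr_ge0.
  by apply: le_trans hY; rewrite ler_pM2r ?invr_gt0 //; lra.
have YL_expand : p * s * ((L + ln a - ln (rate a 0)) / a) =
    s * (p / a - c) * L + s * (c * L) + p * s / a * (ln a - ln (rate a 0)).
  by field; rewrite gt_eqF.
rewrite YL_expand hs in YL; lra.
Qed.

(* Since e^{-1} > 1/4, suitable parameters exist with c > 1/(4a). *)
Lemma chernoff_parameters (p : R) : 1 / 4 < p ->
  exists c s, [/\ 1 / (4 * a) < c, 0 <= s & s * (p / a - c) = 2].
Proof.
move=> p4; have p0 : 0 < p - 1 / 4 by rewrite subr_gt0.
exists ((p + 1 / 4) / (2 * a)), (4 * a / (p - 1 / 4)); split.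
- rewrite ltr_pdivlMr ?mulr_gt0 //.
  have -> : 1 / (4 * a) * (2 * a) = 1 / 2 by field; rewrite gt_eqF.
  lra.
- by rewrite divr_ge0 // ?mulr_ge0 // ltW.
- by field; rewrite !gt_eqF //; lra.
Qed.

End rate_estimates.

Lemma expRN1_gt_quarter {R : realType} : 1 / 4 < expR (-1 : R).
Proof.
have -> : (-1 : R) = - (1 / 2) + - (1 / 2) by field.
have h : 1 + - (1 / 2) < expR (- (1 / 2) : R) by apply: expR_gt1Dx; rewrite oppr_eq0.
have h0 : 0 < 1 + - (1 / 2) :> R by lra.
rewrite expRD; have := ltr_pM (ltW h0) (ltW h0) h h; lra.
Qed.

Section summability.
Context {R : realType}.

Definition tele (n : nat) : R := (n.+1%:R)^-1 - (n.+2%:R)^-1.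

Lemma teleE n : tele n = ((n.+1%:R) * (n.+2%:R))^-1.
Proof.
rewrite /tele -[n.+2%:R]natr1.
have h : 0 < n.+1%:R :> R by rewrite ltr0n.
by field; rewrite gt_eqF ?(addr_gt0 h) // gt_eqF.
Qed.

Lemma tele_gt0 n : 0 < tele n.
Proof. by rewrite teleE invr_gt0 mulr_gt0. Qed.

Lemma sum_tele N : \sum_(k < N) tele k = 1 - (N.+1%:R)^-1.
Proof.
elim: N => [|N IH]; first by rewrite big_ord0 invr1 subrr.
by rewrite big_ord_recr /= IH /tele; ring.
Qed.

Lemma cvg_series_scaled_tele (M : R) : cvgn (series (fun n => M * tele n)).
Proof.
have -> : series (fun n => M * tele n) = (fun n => M * (1 - harmonic n)).
  by apply/funext => n; rewrite seriesEord /= -mulr_sumr sum_tele; case: n.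
apply/cvg_ex; exists (M * (1 - 0)).
by apply: cvgM; [exact: cvg_cst | apply: cvgB; [exact: cvg_cst | exact: cvg_harmonic]].
Qed.

Lemma nneseries_scaled_tele_le (M : R) : 0 <= M ->
  (\sum_(n <oo) (M * tele n)%:E <= M%:E)%E.
Proof.
move=> M0; apply: lime_le.
  by apply: is_cvg_nneseries => n _ _; rewrite lee_fin mulr_ge0 // ltW // tele_gt0.
apply: nearW => N; rewrite sumEFin lee_fin big_mkord -mulr_sumr sum_tele.
by rewrite ler_piMr // lerBlDr lerDl invr_ge0.
Qed.

Lemma inv_sqr_le_tele n : (1 <= n)%N -> ((n%:R) ^+ 2)^-1 <= 6 * tele n :> R.
Proof.
move=> n1; rewrite teleE.
have n0 : 1 <= n%:R :> R by rewrite ler1n.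
rewrite -[n.+1%:R]natr1 -[n.+2%:R]natr1 -[n.+1%:R]natr1.
set x := n%:R in n0 *.
rewrite -[X in X <= _]mulr1 ler_pdivrMl ?exprn_gt0 //; last lra.
rewrite mulrA ler_pdivlMr; last by rewrite mulr_gt0; lra.
by nra.
Qed.

Lemma tele_ge n N : (n <= N)%N -> 1 <= (N.+1%:R * N.+2%:R) * tele n :> R.
Proof.
move=> nN; rewrite teleE ler_pdivlMr ?mul1r ?mulr_gt0 //.
by rewrite ler_pM // ?ler_nat ltnS.
Qed.

Lemma expR_N2ln n : (0 < n)%N -> expR (- (2 * ln n%:R)) = ((n%:R) ^+ 2)^-1 :> R.
Proof. by move=> n0; rewrite expRN -[2]/(2%:R) expRM_natl lnK // posrE ltr0n. Qed.

Lemma ln_nat_eventually_ge (M : R) : exists N, forall n, (N <= n)%N -> M <= ln n%:R.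
Proof.
exists (Num.truncn (expR M)).+1 => n hn.
have Mn : expR M < n%:R by apply: lt_le_trans (truncnS_gt _) _; rewrite ler_nat.
rewrite -[leLHS]expRK ler_ln ?posrE ?expR_gt0 ?ltW //.
exact: lt_trans (expR_gt0 _) Mn.
Qed.

(* A sequence with values in [0,1] that is eventually below 1/n^2 has a
   convergent series: it is dominated by a multiple of tele. *)
Lemma cvg_series_eventually_le_inv_sqr (u : R ^nat) (N : nat) :
  (forall n, 0 <= u n <= 1) -> (forall n, (N <= n)%N -> u n <= ((n%:R) ^+ 2)^-1) ->
  cvgn (series u).
Proof.
move=> u01 uN.
pose N1 := maxn N 1; pose M : R := N1.+1%:R * N1.+2%:R + 6.
apply: (@series_le_cvg _ _ (fun n => M * tele n)).
- by move=> n; have /andP[] := u01 n.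
- by move=> n; rewrite mulr_ge0 ?(ltW (tele_gt0 n)) // addr_ge0 // mulr_ge0.
- move=> n; have t0 := tele_gt0 n; have /andP[u0 u1] := u01 n.
  have [N1n|nN1] := leqP N1 n.
    have n1 : (1 <= n)%N by apply: leq_trans N1n; rewrite leq_maxr.
    apply: le_trans (uN _ (leq_trans (leq_maxl _ _) N1n)) _.
    by apply: le_trans (inv_sqr_le_tele n1) _; rewrite ler_pM2r // lerDr mulr_ge0.
  apply: le_trans u1 _; apply: le_trans (tele_ge (ltnW nN1)) _.
  by rewrite ler_pM2r // lerDl.
- exact: cvg_series_scaled_tele.
Qed.

Lemma gauss_summable_of_ln_ge (y : nat -> R) (b : R) (N : nat) : 0 < b ->
  (forall n, (N <= n)%N -> ln n%:R / b <= y n) -> gauss_summable y.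
Proof.
move=> b0 hyb al al0; pose k := b^-1.
have k0 : 0 < k by rewrite invr_gt0.
have hy n : (N <= n)%N -> k * ln n%:R <= y n by move=> /hyb; rewrite mulrC.
have ak0 : 0 < al * k ^+ 2 by rewrite mulr_gt0 // exprn_gt0.
have [N2 hN2] := ln_nat_eventually_ge (2 / (al * k ^+ 2)).
apply: (@cvg_series_eventually_le_inv_sqr _ (maxn (maxn N N2) 1)).
  move=> n; rewrite expR_ge0 expR_le1 mulNr oppr_le0 mulr_ge0 ?sqr_ge0 //.
  exact: ltW.
move=> n; rewrite !geq_max => /andP[/andP[nN nN2] n1].
rewrite -expR_N2ln // ler_expR mulNr lerN2.
have L0 : 0 <= ln n%:R :> R by rewrite ln_ge0 // ler1n.
have := hN2 _ nN2; have := hy _ nN.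
set L := ln n%:R in L0 *; move=> kLy hL.
have kL0 : 0 <= k * L by rewrite mulr_ge0 // ltW.
have ky : (k * L) * (k * L) <= y n * y n by apply: ler_pM.
have akL : 2 <= al * k ^+ 2 * L by move: hL; rewrite ler_pdivrMr // mulrC.
have : 2 * L <= al * k ^+ 2 * L * L by apply: ler_wpM2r.
have : al * ((k * L) * (k * L)) <= al * (y n * y n) by apply: ler_wpM2l => //; exact: ltW.
rewrite expr2; nra.
Qed.

End summability.

Section transfer.
Context {R : realType}.

Lemma limn_esup_lt_eventually (u : (\bar R)^nat) (x : \bar R) :
  (limn_esup u < x)%E -> exists N, forall n, (N <= n)%N -> (u n < x)%E.
Proof.
rewrite /limn_esup /limf_esup => /ereal_inf_lt [_ [E [N _ hN] <-]] hs.
exists N => n nN; apply: le_lt_trans hs; apply: ereal_sup_ubound.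
by exists n => //; exact: hN.
Qed.

Lemma partial_sum_ge_dist (U V : nat -> R) n :
  partial_sum V n - \sum_(i < n) `|V i - U i| <= partial_sum U n /\
  partial_sum V n - \sum_(i < n) `|V i - U i| <= partial_sum (seq_min U V) n.
Proof.
rewrite /partial_sum -!sumrB; split; apply: ler_sum => i _.
  by rewrite lerBlDr -lerBlDl ler_norm.
rewrite /seq_min le_min lerBlDr -lerBlDl ler_norm /=.
by rewrite lerBlDr lerDl.
Qed.

(* Indeed the l^1
   distance is eventually at most (c - 1/(4a)) ln n. *)
Lemma partial_sums_transfer (a c : R) (U V : nat -> R) (N0 : nat) :
  0 < a -> 1 / (4 * a) < c ->
  (forall n, (N0 <= n)%N -> c * ln n%:R <= partial_sum V n) ->
  limn_esup (fun n : nat =>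
     ((ln (ln n%:R) / ln n%:R) * \sum_(i < n) `|V i - U i|)%:E) = 0%E ->
  exists N, (2 <= N)%N /\ forall n, (N <= n)%N ->
    [/\ ln n%:R / (4 * a) <= partial_sum U n,
        ln n%:R / (4 * a) <= partial_sum (seq_min U V) n &
        ln n%:R / (4 * a) <= partial_sum V n].
Proof.
move=> a0 ca hV hUV.
pose eps := c - 1 / (4 * a).
have [N1 hN1] : exists N, forall n, (N <= n)%N ->
    (((ln (ln n%:R) / ln n%:R) * \sum_(i < n) `|V i - U i|)%:E < eps%:E)%E.
  by apply: limn_esup_lt_eventually; rewrite hUV lte_fin subr_gt0.
have [N2 hN2] := ln_nat_eventually_ge (expR 1 : R).
exists (maxn (maxn N0 N1) (maxn N2 2)); split; first by rewrite !leq_max leqnn !orbT.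
move=> n; rewrite !geq_max => /andP[/andP[nN0 nN1] /andP[nN2 n2]].
have := hN1 _ nN1; rewrite lte_fin; have := hV _ nN0; have := hN2 _ nN2.
have := partial_sum_ge_dist U V n.
set L := ln n%:R; set D := \sum_(i < n) `|V i - U i| => -[hU hm] eL cL hD.
have L0 : 0 < L by apply: lt_le_trans eL; exact: expR_gt0.
have lnL : 1 <= ln L by rewrite -[leLHS](expRK 1) ler_ln ?posrE ?expR_gt0.
have D0 : 0 <= D by apply: sumr_ge0.
have Deps : D <= eps * L.
  have : ln L / L * D * L <= eps * L by rewrite ler_pM2r // ltW.
  have -> : ln L / L * D * L = ln L * D by field; rewrite gt_eqF.
  by apply: le_trans; rewrite ler_peMl.
have e2 : c * L - eps * L = L / (4 * a) by rewrite /eps; field; rewrite gt_eqF.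
have e3 : L / (4 * a) <= c * L.
  by rewrite [leLHS](_ : _ = 1 / (4 * a) * L) ?ler_wpM2r ?ltW // mul1r mulrC.
split; lra.
Qed.

End transfer.

Lemma ae_eventually_notin {R : realType} (d : measure_display)
    (T : measurableType d) (mu : {measure set T -> \bar R}) (F : (set T)^nat) :
  (forall n, measurable (F n)) -> (\sum_(n <oo) mu (F n) < +oo)%E ->
  {ae mu, forall w, exists N, forall n, (N <= n)%N -> ~ F n w}.
Proof.
move=> mF hsum; exists (lim_sup_set F); split.
- apply: bigcap_measurableType => k _; exact: bigcup_measurable.
- exact: lim_sup_set_cvg0.
- move=> w /= hw N _; apply: contrapT => hn; apply: hw.
  by exists N => n nN Fn; apply: hn; exists n.
Qed.

Definition pattern_ext (n : nat) (f : {ffun 'I_n -> bool}) (i : nat) : bool :=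
  [exists k : 'I_n, (val k == i) && f k].

Lemma pattern_extE (n : nat) (f : {ffun 'I_n -> bool}) (k : 'I_n) :
  pattern_ext f k = f k.
Proof.
apply/existsP/idP => [[k' /andP[/eqP /val_inj -> //]]|fk].
by exists k; rewrite eqxx.
Qed.

Section lower_bound_for_V.
Context {R : realType} (a : R) (a0 : 0 < a) (d : measure_display)
  (T : measurableType d) (P : probability T R) (V : T -> nat -> R)
  (hV : has_law_pi P a V).

(* The side of the threshold 1/lambda_i prescribed by the pattern f:
   above it with probability e^{-1}, below it with probability 1 - e^{-1}. *)
Definition threshold_side (n : nat) (f : {ffun 'I_n -> bool}) (i : nat) : set R :=
  if pattern_ext f i then `](rate a i)^-1, +oo[%classic
  else `]-oo, (rate a i)^-1]%classic.

Definition rectangle (n : nat) (f : {ffun 'I_n -> bool}) : set T :=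
  \bigcap_(i in `I_n) [set w | threshold_side f i (V w i)].

Lemma rectangle_measurable n (f : {ffun 'I_n -> bool}) : measurable (rectangle f).
Proof.
apply: bigcap_measurableType => i _.
have mB : measurable (threshold_side f i) by rewrite /threshold_side; case: ifPn.
by have := hV.1 i measurableT _ mB; rewrite setTI.
Qed.

Lemma rectangle_prob n (f : {ffun 'I_n -> bool}) : P (rectangle f) =
  (\prod_(i < n) (if f i then expR (-1) else 1 - expR (-1)))%:E.
Proof.
rewrite /rectangle hV.2; last by move=> i; rewrite /threshold_side; case: ifPn.
rewrite -prodEFin; apply: eq_bigr => i _.
have l0 := rate_gt0 a0 i; have l1 : 0 < (rate a i)^-1 by rewrite invr_gt0.
rewrite /threshold_side pattern_extE.
by case: (f i); rewrite ?exponential_prob_gt ?exponential_prob_le // mulNr mulfV ?gt_eqF.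
Qed.

Definition light_event (n : nat) (r : R) : set T :=
  \big[setU/set0]_(f <- index_enum {ffun 'I_n -> bool} |
                   \sum_(i < n | f i) (rate a i)^-1 < r) rectangle f.

Lemma light_event_measurable n r : measurable (light_event n r).
Proof. by apply: bigsetU_measurable => f _; exact: rectangle_measurable. Qed.

Lemma light_event_prob_le n r s : 0 <= s ->
  (P (light_event n r) <=
   (expR (s * r - expR (-1) * s * \sum_(i < n) (rate a i)^-1
     + expR (-1) * s ^+ 2 * \sum_(i < n) ((rate a i)^-1) ^+ 2))%:E)%E.
Proof.
move=> s0; apply: le_trans (measure_bigsetU_le P _ _ (@rectangle_measurable n)) _.
rewrite (eq_bigr _ (fun f _ => rectangle_prob f)) sumEFin lee_fin.
apply: (@chernoff_lower_tail _ n (fun i => (rate a i)^-1)) => //.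
- by rewrite expR_ge0 expR_le1 lerN10.
- by move=> i; rewrite invr_ge0 ltW // rate_gt0.
Qed.

(* If V >= 0, then s(V)_n is at least the sum of the thresholds 1/lambda_i
   that are exceeded, so {s(V)_n < r} is contained in [light_event n r]. *)
Lemma partial_sum_lt_light_event n r w : (forall i, 0 <= V w i) ->
  partial_sum (V w) n < r -> light_event n r w.
Proof.
move=> V0 Vr; pose f := [ffun k : 'I_n => (rate a k)^-1 < V w k].
rewrite /light_event -bigcup_seq_cond; exists f.
  rewrite /= mem_index_enum /=; apply: le_lt_trans Vr; rewrite /partial_sum.
  rewrite [leRHS](bigID (fun i : 'I_n => f i)) /= -[leLHS]addr0.
  apply: lerD; last exact: sumr_ge0.
  by apply: ler_sum => i; rewrite ffunE => /ltW.
move=> i /= iI; rewrite /threshold_side (pattern_extE f (Ordinal iI)) ffunE /=.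
by case: ifPn => h; rewrite /= in_itv /= ?andbT // leNgt.
Qed.

Lemma V_ge0_ae : {ae P, forall w i, 0 <= V w i}.
Proof.
suff Vi_ge0 i : {ae P, forall w, 0 <= V w i} by exact: ae_foralln.
pose B : nat -> set R := fun j => if j == i then `]-oo, 0[%classic else setT.
have mB j : measurable (B j) by rewrite /B; case: ifPn.
exists (\bigcap_(j in `I_i.+1) [set w | B j (V w j)]); split.
- apply: bigcap_measurableType => j _.
  by have := hV.1 j measurableT _ (mB j); rewrite setTI.
- by rewrite hV.2 // big_ord_recr /= /B eqxx exponential_prob_lt0 mule0.
- move=> w /= hw j /= ji; rewrite /B; case: ifPn => [/eqP -> | _ //].
  by rewrite /= in_itv /= ltNge; apply/negP.
Qed.

Lemma partial_sum_V_ln_ge_ae (c s K : R) : 0 <= s ->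
  (forall n, (1 <= n)%N ->
   s * (c * ln n%:R) - expR (-1) * s * \sum_(i < n) (rate a i)^-1
   + expR (-1) * s ^+ 2 * \sum_(i < n) ((rate a i)^-1) ^+ 2 <= - (2 * ln n%:R) + K) ->
  {ae P, forall w, exists N, forall n, (N <= n)%N -> c * ln n%:R <= partial_sum (V w) n}.
Proof.
move=> s0 hK.
pose F n := light_event n (c * ln n%:R).
pose M := 6 * expR K + 2.
have M0 : 0 <= M by rewrite addr_ge0 // mulr_ge0 // expR_ge0.
have eK := expR_gt0 K.
have PF n : (P (F n) <= (M * tele n)%:E)%E.
  case: n => [|n].
    apply: le_trans (probability_le1 _ (light_event_measurable _ _)) _.
    by rewrite lee_fin teleE /M; lra.
  apply: le_trans (light_event_prob_le _ _ s0) _; rewrite lee_fin.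
  apply: le_trans (_ : expR (- (2 * ln n.+1%:R) + K) <= _); first by rewrite ler_expR hK.
  rewrite expRD expR_N2ln // /M.
  have t0 : 0 < tele n.+1 :> R := tele_gt0 _.
  have := inv_sqr_le_tele (R := R) (isT : (1 <= n.+1)%N).
  set x := ((n.+1%:R) ^+ 2)^-1 => hx.
  have : expR K * x <= expR K * (6 * tele n.+1) by rewrite ler_wpM2l ?expR_ge0.
  nra.
have hsum : (\sum_(n <oo) P (F n) < +oo)%E.
  apply: le_lt_trans (ltry M); apply: le_trans (nneseries_scaled_tele_le M0).
  by apply: lee_nneseries => [n _ _|n _]; [exact: measure_ge0 | exact: PF].
have hBC := ae_eventually_notin (fun n => light_event_measurable n _) hsum.
apply: filterS2 V_ge0_ae hBC => w V0 [N hN]; exists N => n nN.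
by rewrite leNgt; apply/negP => Vlt; apply: (hN n nN); exact: partial_sum_lt_light_event.
Qed.

End lower_bound_for_V.

Lemma partial_sums_ln_ge_ae (R : realType) (a : R) (d : measure_display)
    (T : measurableType d) (P : probability T R) (U V : T -> nat -> R) :
  0 < a -> has_law_pi P a V ->
  {ae P, forall w, limn_esup (fun n : nat =>
      ((ln (ln n%:R) / ln n%:R) * \sum_(i < n) `|V w i - U w i|)%:E) = 0%E} ->
  {ae P, forall w, exists N, (2 <= N)%N /\ forall n, (N <= n)%N ->
    [/\ ln n%:R / (4 * a) <= partial_sum (U w) n,
        ln n%:R / (4 * a) <= partial_sum (seq_min (U w) (V w)) n &
        ln n%:R / (4 * a) <= partial_sum (V w) n]}.
Proof.
move=> a0 hV hUV.
have [c [s [ca s0 hs]]] := chernoff_parameters a0 expRN1_gt_quarter.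
have [K hK] := chernoff_exponent_le a0 (expR_ge0 _) s0 hs.
apply: filterS2 (partial_sum_V_ln_ge_ae a0 hV s0 hK) hUV => w [N hN].
exact: partial_sums_transfer a0 ca hN.
Qed.

Theorem mainTheorem10 (R : realType) (a : R) (d : measure_display)
  (T : measurableType d) (P : probability T R) (U V : T -> nat -> R) :
  0 < a ->
  (* U is a random element of R_+^infty (its law is mu) *)
  (forall i, measurable_fun setT (fun w => U w i)) ->
  (forall w i, 0 <= U w i) ->
  (* V has law pi_a *)
  has_law_pi P a V ->
  (* limsup_d (log log d / log d) sum_{i=1}^d |V_i - U_i| = 0  a.s. *)
  {ae P, forall w, limn_esup (fun n : nat =>
      ((ln (ln n%:R) / ln n%:R) * \sum_(i < n) `|V w i - U w i|)%:E)
      = 0%E} ->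
  (* limsup_d U_d / (d V_d) < oo  a.s.  (U_d = U (d-1)) *)
  {ae P, forall w, (limn_esup (fun n : nat =>
      (U w n / (n.+1%:R * V w n))%:E) < +oo)%E} ->
  {ae P, forall w, exists i0 : nat, (2 <= i0)%N /\
      forall i : nat, (i0 <= i)%N ->
        ln i%:R / (4 * a) <= partial_sum (U w) i} /\
  {ae P, forall w, gauss_summable (partial_sum (U w))} /\
  {ae P, forall w, gauss_summable (partial_sum (seq_min (U w) (V w)))} /\
  {ae P, forall w, gauss_summable (partial_sum (V w))} /\
  law_in_S P U.
Proof.
move=> a0 _ U0 hV hUV _.
have hall := partial_sums_ln_ge_ae a0 hV hUV.
have a4 : 0 < 4 * a by rewrite mulr_gt0.
have gaussU : {ae P, forall w, gauss_summable (partial_sum (U w))}.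
  apply: filterS hall => w [N [_ hN]].
  by apply: (gauss_summable_of_ln_ge (N := N) a4) => n /hN[].
split; first by apply: filterS hall => w [N [N2 hN]]; exists N; split => // n /hN[].
split; first exact: gaussU.
split.
  apply: filterS hall => w [N [_ hN]].
  by apply: (gauss_summable_of_ln_ge (N := N) a4) => n /hN[].
split; last exact: conj U0 gaussU.
apply: filterS hall => w [N [_ hN]].
by apply: (gauss_summable_of_ln_ge (N := N) a4) => n /hN[].
Qed.
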